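(* Let $L=\{x: Ax\le b\}$ be a full-dimensional rational polytope in $\mathbb{R}^m$, $m\ge2$, where $A$ is an integral matrix with rows $a_1,\dots,a_n$ and $b$ is an integral vector. Suppose $a_1x\le b_1$ defines a facet of $L$ and its affine hull $\{x: a_1x=b_1\}$ contains no integer point. Let $\tilde A$ be $A$ with row $a_1$ removed and $\tilde b$ be $b$ with its first component removed. Then there exists a rational inequality $a'x\le b'$ such that $\tilde L:=\{x:\tilde Ax\le\tilde b,\ a'x\le b'\}$ contains the same integer points as $L$, $L\subseteq\tilde L$, and the hyperplane $\{x: a'x=b'\}$ contains integer points. *)

From HB Require Import structures.
From mathcomp Require Import all_boot all_order all_algebra.
From mathcomp Require Import reals.
Set Implicit Arguments. Unset Strict Implicit. Unset Printing Implicit Defensive.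
Import Order.TTheory GRing.Theory Num.Theory.
Local Open Scope ring_scope.

Section PolyDefs.
Variables (R : realType) (m : nat).

Definition dotv (a : 'rV[R]_m) (x : 'cV[R]_m) : R := (a *m x) 0 0.

Definition introw n (A : 'M[int]_(n, m)) (i : 'I_n) : 'rV[R]_m :=
  map_mx (fun z : int => z%:~R) (row i A).

Definition in_polyh n (A : 'M[int]_(n, m)) (b : 'cV[int]_n) (x : 'cV[R]_m) : Prop :=
  forall i, dotv (introw A i) x <= (b i 0)%:~R.

Definition integral_pt (x : 'cV[R]_m) : Prop := forall i, x i 0 \is a Num.int.

Definition bounded_polyh n (A : 'M[int]_(n, m)) (b : 'cV[int]_n) : Prop :=
  exists M : R, forall x, in_polyh A b x -> forall i, `|x i 0| <= M.

Definition full_dim n (A : 'M[int]_(n, m)) (b : 'cV[int]_n) : Prop :=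
  exists (x : 'cV[R]_m) (e : R), 0 < e /\
    forall y : 'cV[R]_m, (forall i, `|y i 0 - x i 0| < e) -> in_polyh A b y.

Definition face_of n (A : 'M[int]_(n, m)) (b : 'cV[int]_n) (i0 : 'I_n)
  (x : 'cV[R]_m) : Prop :=
  in_polyh A b x /\ dotv (introw A i0) x = (b i0 0)%:~R.

(* row i0 defines a facet: the face is proper and has dimension m-1,
   i.e. it contains m affinely independent points x0, x0 + d_1, ..., x0 + d_{m-1}
   (d_k the rows of a rank m-1 matrix D). *)
Definition is_facet n (A : 'M[int]_(n, m)) (b : 'cV[int]_n) (i0 : 'I_n) : Prop :=
  (exists x, in_polyh A b x /\ dotv (introw A i0) x < (b i0 0)%:~R) /\
  exists (x0 : 'cV[R]_m) (D : 'M[R]_(m.-1, m)),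
    [/\ face_of A b i0 x0,
        (forall k, face_of A b i0 (x0 + (row k D)^T)) &
        \rank D = m.-1].

End PolyDefs.

From HB Require Import structures.
From mathcomp Require Import all_boot all_order all_algebra.
From mathcomp Require Import reals.
From mathcomp Require Import zify ring lra.
Set Implicit Arguments. Unset Strict Implicit. Unset Printing Implicit Defensive.
Import Order.TTheory GRing.Theory Num.Theory.
Local Open Scope ring_scope.

(* Let a_j be another row such that the 2x2 minor M of a_1 and a_j on two
   coordinates k, l is nonzero; it exists because the polytope L is bounded.
   Tilt the facet inequality to (N a_1 - a_j) x <= c for a large integer N.
   The gcd d of the k- and l-coefficients of N a_1 - a_j divides M, which does
   not depend on N, so once N >= K + |M| + |b_j|, where -a_j x <= K on L, some
   multiple c of d lies in [N b_1 + K, N (b_1 + 1) - b_j).  The left end makes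
   the inequality valid on L; the right end, together with a_j x <= b_j, cuts
   off every integer point with a_1 x >= b_1 + 1; and by Bezout the hyperplane
   (N a_1 - a_j) x = c contains an integer point supported on {k, l}. *)

Lemma gcdz_lincomb_bound (p q u v : int) :
  u * p + v * q != 0 -> 0 < gcdz p q <= `|u * p + v * q|.
Proof.
move=> nz; have dvd : (gcdz p q %| u * p + v * q)%Z.
  by rewrite rpredD // dvdz_mull // ?dvdz_gcdl // dvdz_gcdr.
have := dvdn_leq _ dvd; rewrite absz_gt0 => /(_ nz).
have : gcdz p q != 0 by apply: contra nz => /eqP g0; move: dvd; rewrite g0 dvd0z.
rewrite /gcdz -abszE; move: (gcdn _ _) => g; lia.
Qed.

Lemma exists_ord_neq m (k : 'I_m) : (1 < m)%N -> exists l : 'I_m, l != k.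
Proof.
case: m k => [|[|m]] k // _.
by have [->|k0] := eqVneq k ord0; [exists ord_max | exists ord0; rewrite eq_sym].
Qed.

Section DotProduct.
Variables (R : realType) (m : nat).
Implicit Types (a : 'rV[R]_m) (x y : 'cV[R]_m).

Lemma dotvE a x : dotv a x = \sum_c a 0 c * x c 0.
Proof. by rewrite /dotv mxE. Qed.

Lemma dotvDr a x y : dotv a (x + y) = dotv a x + dotv a y.
Proof. by rewrite /dotv mulmxDr mxE. Qed.

Lemma dotvZr a c x : dotv a (c *: x) = c * dotv a x.
Proof. by rewrite /dotv -scalemxAr mxE. Qed.

Lemma dotvBr a x y : dotv a (x - y) = dotv a x - dotv a y.
Proof. by rewrite /dotv mulmxBr !mxE. Qed.

Lemma dotv_delta a k : dotv a (delta_mx k 0) = a 0 k.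
Proof.
rewrite dotvE (bigD1 k) //= big1 ?addr0 => [|c ck]; rewrite !mxE ?eqxx ?mulr1 //.
by rewrite (negbTE ck) mulr0.
Qed.

Lemma introwE n (A : 'M[int]_(n, m)) i c : introw R A i 0 c = (A i c)%:~R.
Proof. by rewrite /introw !mxE. Qed.

Lemma dotv_int n (A : 'M[int]_(n, m)) i x :
  integral_pt x -> dotv (introw R A i) x \is a Num.int.
Proof.
move=> xZ; rewrite dotvE; apply: rpred_sum => c _.
by rewrite introwE rpredM ?intr_int.
Qed.

Lemma exists_coef_neq0 n (A : 'M[int]_(n, m)) i x y :
  dotv (introw R A i) x != dotv (introw R A i) y -> exists k, A i k != 0.
Proof.
case: (pickP (fun k => A i k != 0)) => [k ?|A0]; first by exists k.
suff dot0 z : dotv (introw R A i) z = 0 by rewrite !dot0 eqxx.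
by rewrite dotvE big1 // => c _; rewrite introwE (eqP (negbFE (A0 c))) mul0r.
Qed.

Lemma integral_pt_on_hyperplane a k l (p q c : int) :
  a 0 k = p%:~R -> a 0 l = q%:~R -> (gcdz p q %| c)%Z ->
  exists z, integral_pt z /\ dotv a z = c%:~R.
Proof.
move=> ak al /dvdzP [t ->]; have [u [v uv]] := Bezoutz p q.
exists ((t * u)%:~R *: delta_mx k 0 + (t * v)%:~R *: delta_mx l 0); split.
  by move=> i; rewrite !mxE rpredD // rpredM ?intr_int ?rpred_nat.
rewrite dotvDr !dotvZr !dotv_delta ak al -!intrM -intrD -uv; congr intr; ring.
Qed.

End DotProduct.

Section BoundedPolyhedron.
Variables (R : realType) (m n : nat) (A : 'M[int]_(n, m)) (b : 'cV[int]_n).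
Hypothesis bounded : bounded_polyh R A b.

Lemma bounded_recession_eq0 (x d : 'cV[R]_m) :
  in_polyh A b x -> (forall i, dotv (introw R A i) d = 0) -> d = 0.
Proof.
case: bounded => M xM Px d0; apply/matrixP => c o; rewrite ord1 mxE.
have [//|dc0] := eqVneq (d c 0) 0; exfalso; pose t := (M - x c 0 + 1) / d c 0.
have Py : in_polyh A b (x + t *: d).
  by move=> i; rewrite dotvDr dotvZr d0 mulr0 addr0; apply: Px.
have := xM _ Py c; rewrite !mxE /t divfK // => le.
by have := ler_norm (x c 0 + (M - x c 0 + 1)); lra.
Qed.

Lemma dotv_bounded (a : 'rV[R]_m) :
  exists K : nat, forall x : 'cV[R]_m, in_polyh A b x -> `|dotv a x| <= K%:R.
Proof.
case: bounded => M xM; pose S := \sum_c `|a 0 c| * `|M|.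
have S0 : 0 <= S by rewrite sumr_ge0 // => c _; rewrite mulr_ge0.
exists (Num.bound S) => x Px; apply: le_trans (ltW (archi_boundP S0)).
rewrite dotvE; apply: le_trans (ler_norm_sum _ _ _) _.
apply: ler_sum => c _; rewrite normrM ler_wpM2l //.
exact: le_trans (xM x Px c) (ler_norm _).
Qed.

End BoundedPolyhedron.

Lemma exists_minor_neq0 (R : realType) m n (A : 'M[int]_(n, m)) b
    (x : 'cV[R]_m) i0 k l :
  bounded_polyh R A b -> in_polyh A b x -> A i0 k != 0 -> l != k ->
  exists j, A i0 k * A (lift i0 j) l - A i0 l * A (lift i0 j) k != 0.
Proof.
move=> bounded Px Ak lk.
case: (pickP (fun j => A i0 k * A (lift i0 j) l - A i0 l * A (lift i0 j) k != 0))
  => [j ?|minor0]; first by exists j.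
pose d : 'cV[R]_m := (A i0 k)%:~R *: delta_mx l 0 - (A i0 l)%:~R *: delta_mx k 0.
have d0 : d = 0.
  apply: (bounded_recession_eq0 bounded Px) => i.
  rewrite dotvBr !dotvZr !dotv_delta !introwE -!intrM -intrB.
  have [j ->|->] := unliftP i0 i; first by rewrite (eqP (negbFE (minor0 j))).
  by rewrite mulrC subrr.
have /eqP := congr1 (fun v : 'cV[R]_m => v l 0) d0.
by rewrite !mxE eqxx (negbTE lk) mulr1 mulr0 subr0 intr_eq0 (negbTE Ak).
Qed.

Lemma int_le_of_tilted (R : realType) (z b1 : int) (N w wb c : R) :
  0 <= N -> w <= wb -> N * z%:~R - w <= c -> c < N * (b1 + 1)%:~R - wb ->
  z <= b1.
Proof.
move=> N0 wle le lt; rewrite leNgt -lezD1; apply/negP.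
by rewrite -(ler_int R) => /(ler_wpM2l N0); lra.
Qed.

Section TiltedInequality.
Variables (R : realType) (m n : nat) (A : 'M[int]_(n.+1, m)) (b : 'cV[int]_n.+1).
Variables (i0 : 'I_n.+1) (j : 'I_n) (k l : 'I_m) (K : nat).
Let i1 := lift i0 j.
Let M := A i0 k * A i1 l - A i0 l * A i1 k.
Hypothesis M_neq0 : M != 0.
Hypothesis K_bound :
  forall x : 'cV[R]_m, in_polyh A b x -> - dotv (introw R A i1) x <= K%:R.

Let N : int := K%:Z + `|M| + `|b i1 0|.
Let tilt : 'rV[int]_m := N *: row i0 A - row i1 A.
Let tiltQ : 'rV[rat]_m := map_mx intr tilt.
Let d := gcdz (tilt 0 k) (tilt 0 l).
Let s := N * b i0 0 + K%:Z.
Let c := s + (- s %% d)%Z. (* the least multiple of d above s *)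

Lemma tilt_minor : A i0 l * tilt 0 k + - A i0 k * tilt 0 l = M.
Proof. by rewrite !mxE /M; ring. Qed.

Lemma tilt_gcd_bound : 0 < d <= `|M|.
Proof. by rewrite /d -tilt_minor gcdz_lincomb_bound // tilt_minor. Qed.

Lemma tilt_rhs_dvd : (d %| c)%Z.
Proof.
apply/dvdzP; exists (- divz (- s) d); have := divz_eq (- s) d.
by rewrite /c mulNr; move: (_ * d) (_ %% d)%Z => qd r; lia.
Qed.

Lemma tilt_rhs_bounds : s <= c /\ c < N * (b i0 0 + 1) - b i1 0.
Proof.
have /andP [d0 dM] := tilt_gcd_bound; have d_neq0 : d != 0 by rewrite gt_eqF.
have := modz_ge0 (- s) d_neq0; have := ltz_mod (- s) d_neq0.
rewrite (gtr0_norm d0) /c /s mulrDr mulr1 /N.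
by move: (_ * b i0 0) (_ %% d)%Z => Nb r; lia.
Qed.

Lemma dotv_tilt (x : 'cV[R]_m) :
  dotv (map_mx ratr tiltQ) x =
  N%:~R * dotv (introw R A i0) x - dotv (introw R A i1) x.
Proof.
rewrite !dotvE mulr_sumr -sumrB; apply: eq_bigr => e _.
by rewrite !mxE ratr_int intrB intrM; ring.
Qed.

Lemma tilt_valid (x : 'cV[R]_m) :
  in_polyh A b x -> dotv (map_mx ratr tiltQ) x <= c%:~R.
Proof.
move=> Px; have [sc _] := tilt_rhs_bounds.
have N0 : (0 : R) <= N%:~R by rewrite ler0z.
have := ler_wpM2l N0 (Px i0); have := K_bound Px.
move: sc; rewrite dotv_tilt -(ler_int R) /s intrD intrM; lra.
Qed.

Lemma tilt_cut (x : 'cV[R]_m) : integral_pt x ->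
  (forall i, dotv (introw R A (lift i0 i)) x <= (b (lift i0 i) 0)%:~R) ->
  dotv (map_mx ratr tiltQ) x <= c%:~R -> in_polyh A b x.
Proof.
move=> xZ Px cut i; have [i' ->|->] := unliftP i0 i; first exact: Px.
have /intrP [z xz] := dotv_int A i0 xZ; rewrite xz ler_int.
have [_ cN] := tilt_rhs_bounds.
apply: (int_le_of_tilted (N := N%:~R) (c := c%:~R) _ (Px j)).
- by rewrite ler0z.
- by rewrite -xz -dotv_tilt.
- by rewrite -intrM -intrB ltr_int.
Qed.

Lemma tilt_neq0 : tiltQ != 0.
Proof.
have [d0 _] := andP tilt_gcd_bound; apply: contraTneq d0 => tiltQ0.
have tilt0 i : tilt 0 i = 0.
  have /eqP := congr1 (fun v : 'rV[rat]_m => v 0 i) tiltQ0.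
  by rewrite !mxE intr_eq0 => /eqP.
by rewrite /d !tilt0 ltxx.
Qed.

Lemma tilt_hyperplane_integral :
  exists z : 'cV[R]_m, integral_pt z /\ dotv (map_mx ratr tiltQ) z = c%:~R.
Proof.
by apply: integral_pt_on_hyperplane tilt_rhs_dvd; rewrite !mxE ratr_int.
Qed.

Theorem exists_tilted_cut :
  exists (a' : 'rV[rat]_m) (b' : rat),
    let Ltilde (x : 'cV[R]_m) : Prop :=
      (forall i : 'I_n,
          dotv (introw R A (lift i0 i)) x <= (b (lift i0 i) 0)%:~R) /\
      dotv (map_mx ratr a') x <= ratr b' in
    [/\ a' != 0,
        (forall x : 'cV[R]_m, integral_pt x -> (in_polyh A b x <-> Ltilde x)),
        (forall x : 'cV[R]_m, in_polyh A b x -> Ltilde x) &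
        exists z : 'cV[R]_m, integral_pt z /\ dotv (map_mx ratr a') z = ratr b'].
Proof.
exists tiltQ, c%:~R; rewrite /= ratr_int.
have valid x : in_polyh A b x -> _ :=
  fun Px => conj (fun i => Px (lift i0 i)) (tilt_valid Px).
split; [exact: tilt_neq0 | | exact: valid | exact: tilt_hyperplane_integral].
by move=> x xZ; split=> [/valid | [] /(tilt_cut xZ)].
Qed.

End TiltedInequality.

Theorem lemma7 (R : realType) (m n : nat)
  (A : 'M[int]_(n.+1, m)) (b : 'cV[int]_n.+1) :
  (2 <= m)%N ->
  bounded_polyh R A b ->
  full_dim R A b ->
  is_facet R A b ord0 ->
  ~ (exists z : 'cV[R]_m, integral_pt z /\ dotv (introw R A ord0) z = (b ord0 0)%:~R) ->
  exists (a' : 'rV[rat]_m) (b' : rat),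
    let Ltilde (x : 'cV[R]_m) : Prop :=
      (forall i : 'I_n,
          dotv (introw R A (lift ord0 i)) x <= (b (lift ord0 i) 0)%:~R) /\
      dotv (map_mx ratr a') x <= ratr b' in
    [/\ a' != 0,
        (forall x : 'cV[R]_m, integral_pt x -> (in_polyh A b x <-> Ltilde x)),
        (forall x : 'cV[R]_m, in_polyh A b x -> Ltilde x) &
        exists z : 'cV[R]_m, integral_pt z /\ dotv (map_mx ratr a') z = ratr b'].
Proof.
move=> m2 bounded _ [[x1 [Px1 x1_lt]] [x0 [_ [[_ x0_eq] _ _]]]] _.
have [k Ak] : exists k, A ord0 k != 0.
  by apply: (exists_coef_neq0 (x := x1) (y := x0)); rewrite x0_eq lt_eqF.
have [l lk] := exists_ord_neq k m2.
have [j minor] := exists_minor_neq0 bounded Px1 Ak lk.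
have [K K_bound] := dotv_bounded bounded (introw R A (lift ord0 j)).
apply: (exists_tilted_cut minor) => x Px.
by apply: le_trans (ler_norm _) _; rewrite normrN; apply: K_bound.
Qed.
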